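(* Let $G$ be a graph and let $G_r$ be the reduced graph of $G$. Then $box(G)\leq |V(G_r)|$.
   Context: All graphs are simple, finite and undirected. For a graph $G$, define $x\sim_G y$ iff $N(x)=N(y)$ (equal open neighbourhoods); this is an equivalence relation and $[x]$ denotes the class of $x$. The reduced graph $G_r$ has the equivalence classes as vertices, with distinct classes $[x]$ and $[y]$ adjacent iff $x$ and $y$ are adjacent in $G$. The boxicity $box(G)$ is the least positive integer $\ell$ such that $G$ is isomorphic to the intersection graph of a family of $\ell$-boxes (Cartesian products of $\ell$ closed bounded real intervals). *)

From Stdlib Require Import Reals.
From mathcomp Require Import all_boot.
Set Implicit Arguments. Unset Strict Implicit. Unset Printing Implicit Defensive.

Definition simple_graph (T : finType) (e : rel T) : Prop :=
  symmetric e /\ irreflexive e.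

Definition nbhd (T : finType) (e : rel T) (x : T) : {set T} := [set y | e x y].

Definition same_nbhd (T : finType) (e : rel T) (x y : T) : bool :=
  nbhd e x == nbhd e y.

Definition nclass (T : finType) (e : rel T) (x : T) : {set T} :=
  [set y | same_nbhd e x y].

Definition reduced_vertices (T : finType) (e : rel T) : {set {set T}} :=
  [set nclass e x | x : T].

Definition reduced_adj (T : finType) (e : rel T) (A B : {set T}) : Prop :=
  A \in reduced_vertices e /\ B \in reduced_vertices e /\ A <> B /\
  exists x y, A = nclass e x /\ B = nclass e y /\ e x y.

Record box (l : nat) := Box {
  lo : 'I_l -> R;
  hi : 'I_l -> R;
  lo_le_hi : forall i, Rle (lo i) (hi i) }.

Definition in_box (l : nat) (B : box l) (p : 'I_l -> R) : Prop :=
  forall i, Rle (lo B i) (p i) /\ Rle (p i) (hi B i).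

Definition boxes_meet (l : nat) (B1 B2 : box l) : Prop :=
  exists p : 'I_l -> R, in_box B1 p /\ in_box B2 p.

Definition box_representable (T : finType) (e : rel T) (l : nat) : Prop :=
  exists f : T -> box l, forall x y, x != y -> (e x y <-> boxes_meet (f x) (f y)).

Definition is_boxicity (T : finType) (e : rel T) (b : nat) : Prop :=
  (0 < b)%N /\ box_representable e b /\
  forall l, (0 < l)%N -> box_representable e l -> (b <= l)%N.

From Stdlib Require Import Reals Lra Classical Wf_nat.
From mathcomp Require Import all_boot.

Set Implicit Arguments.
Unset Strict Implicit.

(* Give each twin class C of G its own coordinate.  There a vertex of C is a
   point at a height peculiar to it, a vertex adjacent to C spans the whole
   range, and every other vertex sits at 0.  Twin classes are independent, so
   adjacent vertices meet in every coordinate; non-adjacent x and y are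
   separated in the coordinate of the class of x, to which y is not adjacent. *)

Lemma boxes_meet_iff (l : nat) (B1 B2 : box l) :
  boxes_meet B1 B2 <->
  forall i, Rle (lo B1 i) (hi B2 i) /\ Rle (lo B2 i) (hi B1 i).
Proof.
split.
- move=> [p [in1 in2]] i; have [? ?] := in1 i; have [? ?] := in2 i; lra.
- move=> meet; exists (fun i => Rmax (lo B1 i) (lo B2 i)); split=> i;
    have [? ?] := meet i; have := lo_le_hi B1 i; have := lo_le_hi B2 i;
    have := Rmax_l (lo B1 i) (lo B2 i); have := Rmax_r (lo B1 i) (lo B2 i);
    move=> *; split=> //; apply: Rmax_lub; lra.
Qed.

Definition nat_box (k : nat) (a b : 'I_k -> nat) (ab : forall i, a i <= b i) :
  box k := Box (fun i => le_INR _ _ (leP (ab i))).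

Lemma nat_boxes_meet_iff (k : nat) (a b a' b' : 'I_k -> nat)
    (ab : forall i, a i <= b i) (ab' : forall i, a' i <= b' i) :
  boxes_meet (nat_box ab) (nat_box ab') <->
  forall i, (a i <= b' i) && (a' i <= b i).
Proof.
rewrite boxes_meet_iff /=; split=> meet i.
- by have [? ?] := meet i; apply/andP; split; apply/leP; apply: INR_le.
- by have /andP [/leP ? /leP ?] := meet i; split; apply: le_INR.
Qed.

Lemma exists_boxicity_le (T : finType) (e : rel T) (l : nat) :
  0 < l -> box_representable e l -> exists b, is_boxicity e b /\ b <= l.
Proof.
move=> l_gt0 repr_l.
pose P l := 0 < l /\ box_representable e l.
have [|b [[[b_gt0 repr_b] b_min] _]] :=
  @dec_inh_nat_subset_has_unique_least_element P (fun l => classic (P l)).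
  by exists l.
exists b; split; last by apply/leP; apply: b_min.
by split; [|split=> // l' l'_gt0 repr_l'; apply/leP; apply: b_min].
Qed.

Section TwinCover.

Variables (T : finType) (e : rel T).

Definition adj_to (C : {set T}) (v : T) : bool := [exists w in C, e v w].

Definition compatible (C : {set T}) (x y : T) : bool :=
  ((x \in C) ==> (y \notin C) && adj_to C y) &&
  ((y \in C) ==> (x \notin C) && adj_to C x).

Local Notation height v := (enum_rank v).+1.

Definition twin_lo (C : {set T}) (v : T) : nat :=
  if v \in C then height v else 0.

Definition twin_hi (C : {set T}) (v : T) : nat :=
  if v \in C then height v else if adj_to C v then #|T|.+1 else 0.

Lemma twin_lo_le_hi C v : twin_lo C v <= twin_hi C v.
Proof. by rewrite /twin_lo /twin_hi; case: (v \in C). Qed.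

Lemma twin_intervals_meet C x y : x != y ->
  (twin_lo C x <= twin_hi C y) && (twin_lo C y <= twin_hi C x)
  = compatible C x y.
Proof.
move=> neq_xy; rewrite /twin_lo /twin_hi /compatible.
have height_le (v : T) : height v <= #|T|.+1 by rewrite ltnS ltnW.
case: (x \in C); case: (y \in C); rewrite /= ?andbT //.
- rewrite -eqn_leq eqSS; apply/negbTE; apply: contra neq_xy.
  by move=> /eqP /ord_inj /enum_rank_inj ->.
- by case: (adj_to C y); rewrite ?height_le.
- by case: (adj_to C x); rewrite ?height_le.
Qed.

Definition twin_set (C : {set T}) : Prop :=
  {in C &, forall x y, nbhd e x = nbhd e y}.

Hypotheses (e_sym : symmetric e) (e_irr : irreflexive e).

Variables (k : nat) (F : 'I_k -> {set T}).
Hypotheses (F_twin : forall i, twin_set (F i))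
           (F_cover : forall x, exists i, x \in F i).

Lemma edge_iff_compatible x y : e x y <-> forall i, compatible (F i) x y.
Proof.
split=> [exy i | compat].
- rewrite /compatible /adj_to.
  case xF: (x \in F i); case yF: (y \in F i); rewrite //= ?andbT.
  + have : y \in nbhd e x by rewrite inE.
    by rewrite (F_twin xF yF) inE e_irr.
  + by apply/existsP; exists x; rewrite xF e_sym.
  + by apply/existsP; exists y; rewrite yF.
- have [i xF] := F_cover x.
  move: (compat i); rewrite /compatible xF /=.
  move=> /andP [/andP [_ /existsP [w /andP [wF eyw]]] _].
  have : y \in nbhd e w by rewrite inE e_sym.
  by rewrite -(F_twin xF wF) inE.
Qed.

Theorem box_representable_twin_cover : box_representable e k.
Proof.
exists (fun v => nat_box (fun i => twin_lo_le_hi (F i) v)) => x y neq_xy.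
rewrite nat_boxes_meet_iff edge_iff_compatible.
by split=> meet i; [rewrite twin_intervals_meet | rewrite -twin_intervals_meet].
Qed.

End TwinCover.

Lemma mem_nclass (T : finType) (e : rel T) (x : T) : x \in nclass e x.
Proof. by rewrite inE /same_nbhd. Qed.

Lemma nclass_twin (T : finType) (e : rel T) (x : T) : twin_set e (nclass e x).
Proof. by move=> y z; rewrite !inE /same_nbhd => /eqP <- /eqP. Qed.

Lemma box_representable_reduced (T : finType) (e : rel T) :
  simple_graph e -> box_representable e #|reduced_vertices e|.
Proof.
move=> [e_sym e_irr].
apply: (box_representable_twin_cover e_sym e_irr (F := enum_val)).
- by move=> i; have /imsetP [x _ ->] := enum_valP i; apply: nclass_twin.
- move=> x; have cls_x : nclass e x \in reduced_vertices e by apply: imset_f.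
  exists (enum_rank_in cls_x (nclass e x)).
  by rewrite enum_rankK_in ?mem_nclass.
Qed.

Theorem corollary3p2 (T : finType) (e : rel T) :
  simple_graph e -> (0 < #|T|)%N ->
  exists b, is_boxicity e b /\ (b <= #|reduced_vertices e|)%N.
Proof.
move=> graph_e /card_gt0P [x _].
apply: exists_boxicity_le; last exact: box_representable_reduced.
by apply/card_gt0P; exists (nclass e x); apply: imset_f.
Qed.
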